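(* In the setting of the context (FSR scheme with direct flux reconstruction), let $\mathcal{E}_j=(\Phi_{j+1/2}-\Phi_{j-1/2})/h$, evaluated on the exact nodal values. If $\kappa_3=0$ and $\theta_3=0$, then as $h\to0$, with all derivatives evaluated at $x_j$, $$\mathcal{E}_j=\frac{\partial f}{\partial x}+\frac{3\theta-1}{12}\frac{\partial^3 f}{\partial x^3}h^2-\frac{\kappa-1}{8}\left[\frac{\partial D}{\partial x}\frac{\partial^3 u}{\partial x^3}+D(u(x_j))\frac{\partial^4 u}{\partial x^4}\right]h^3+\frac{15\theta-13}{240}\frac{\partial^5 f}{\partial x^5}h^4+O(h^5),$$ where $f$ denotes $f(u(x))$ and $\partial D/\partial x=\frac{d}{dx}D(u(x))$. In particular, with $\theta=1/3$ the scheme is third-order accurate.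
   Context: Let $h>0$, uniform grid $x_i=ih$, $i\in\mathbb{Z}$. Let $u$ be a smooth real function of $x$, $u_i=u(x_i)$; let $f$ (flux) and $D$ (dissipation coefficient) be smooth real functions of one variable; $f_i=f(u_i)$. For nodal values $g_i$ define successive central differences $(g_x)_i=(g_{i+1}-g_{i-1})/(2h)$, $(g_{xx})_i=((g_x)_{i+1}-(g_x)_{i-1})/(2h)$, and for the face $i+1/2$ with $j=i$, $k=i+1$, define $T_j[g]=\frac h4((g_x)_k-(g_x)_j)-\frac{h^2}{4}(g_{xx})_j$, $T_k[g]=\frac h4((g_x)_k-(g_x)_j)-\frac{h^2}{4}(g_{xx})_k$. Reconstructed solution states (parameters $\kappa,\kappa_3$): $u_L=\kappa\frac{u_j+u_k}{2}+(1-\kappa)[u_j+\frac h2(u_x)_j]+\kappa_3T_j[u]$, $u_R=\kappa\frac{u_j+u_k}{2}+(1-\kappa)[u_k-\frac h2(u_x)_k]+\kappa_3T_k[u]$. Reconstructed fluxes (parameters $\theta,\theta_3$): $f_L=\theta\frac{f_j+f_k}{2}+(1-\theta)[f_j+\frac h2(f_x)_j]+\theta_3T_j[f]$, $f_R=\theta\frac{f_j+f_k}{2}+(1-\theta)[f_k-\frac h2(f_x)_k]+\theta_3T_k[f]$. Numerical flux: $\Phi_{i+1/2}=\frac12(f_L+f_R)-\frac12D_{i+1/2}(u_R-u_L)$, with $D_{i+1/2}=\bar D(u_i,u_{i+1})$ for a smooth symmetric $\bar D$ with $\bar D(v,v)=D(v)$. *)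

From Stdlib Require Import Reals ZArith List.
From Coquelicot Require Import Coquelicot.
Open Scope R_scope.

Definition smooth (g : R -> R) : Prop :=
  forall (n : nat) (x : R), ex_derive_n g n x.

Fixpoint pd (ds : list bool) (g : R -> R -> R) : R -> R -> R :=
  match ds with
  | nil => g
  | b :: ds' =>
      let g' := pd ds' g in
      if b then (fun x y => Derive (fun t => g' t y) x)
      else (fun x y => Derive (fun t => g' x t) y)
  end.

Definition smooth2 (g : R -> R -> R) : Prop :=
  forall ds : list bool,
    (forall x y, ex_derive (fun t => pd ds g t y) x /\
                 ex_derive (fun t => pd ds g x t) y) /\
    (forall x y, continuous (fun p : R * R => pd ds g (fst p) (snd p)) (x, y)).

(** Nodal data are functions [Z -> R] (index i <-> node x_i). *)

Definition dx (h : R) (g : Z -> R) (i : Z) : R :=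
  (g (i + 1)%Z - g (i - 1)%Z) / (2 * h).

Definition dxx (h : R) (g : Z -> R) (i : Z) : R :=
  (dx h g (i + 1)%Z - dx h g (i - 1)%Z) / (2 * h).

(* Face i+1/2, j = i, k = i+1 *)
Definition Tj (h : R) (g : Z -> R) (i : Z) : R :=
  h / 4 * (dx h g (i + 1)%Z - dx h g i) - h ^ 2 / 4 * dxx h g i.
Definition Tk (h : R) (g : Z -> R) (i : Z) : R :=
  h / 4 * (dx h g (i + 1)%Z - dx h g i) - h ^ 2 / 4 * dxx h g (i + 1)%Z.

(* Left / right reconstructed states at face i+1/2 with parameters (k, k3) *)
Definition recL (k k3 h : R) (g : Z -> R) (i : Z) : R :=
  k * (g i + g (i + 1)%Z) / 2 + (1 - k) * (g i + h / 2 * dx h g i)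
  + k3 * Tj h g i.
Definition recR (k k3 h : R) (g : Z -> R) (i : Z) : R :=
  k * (g i + g (i + 1)%Z) / 2
  + (1 - k) * (g (i + 1)%Z - h / 2 * dx h g (i + 1)%Z)
  + k3 * Tk h g i.

Definition numflux (f : R -> R) (Dbar : R -> R -> R)
  (kap kap3 th th3 h : R) (uu : Z -> R) (i : Z) : R :=
  let fu := fun m => f (uu m) in
  (recL th th3 h fu i + recR th th3 h fu i) / 2
  - Dbar (uu i) (uu (i + 1)%Z) * (recR kap kap3 h uu i - recL kap kap3 h uu i) / 2.

(** Truncation error E_j at the node x_j = X of the uniform grid of spacing h
    through X (nodes X + (i-j) h; we index so that j = 0). *)
Definition fsr_error (u f : R -> R) (Dbar : R -> R -> R)
  (kap kap3 th th3 h X : R) : R :=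
  let uu := fun i : Z => u (X + IZR i * h) in
  (numflux f Dbar kap kap3 th th3 h uu 0%Z
   - numflux f Dbar kap kap3 th th3 h uu (-1)%Z) / h.

From Stdlib Require Import Reals ZArith List Lra Lia.
From Coquelicot Require Import Coquelicot.
Open Scope R_scope.
Import ListNotations.

(* Every term of the truncation error is a finite-difference stencil
   [sum_i c_i g (X + m_i h)] applied to [F = f o u], to [u], or to
   [G y = Dbar (u X) (u y)]: by symmetry of [Dbar] both interface coefficients
   are values of [G], at [X + h] and [X - h]. Taylor's theorem with Lagrange
   remainder expands a stencil in powers of [h], the coefficients being the
   moments [sum_i c_i m_i^k]. The dissipative part [D+ d+ - D- d-] is split as
   [((D+ - D-) (d+ + d-) + (D+ + D-) (d+ - d-)) / 2], whose factors are
   [O(h)], [O(h^3)], [O(1)] and [O(h^4)]; finally the chain rule and symmetry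
   give [d/dx D (u x) = 2 d/dy Dbar (u X) (u y)] at [X]. *)

Definition C_n (n : nat) (g : R -> R) : Prop :=
  forall k x, (k <= n)%nat -> ex_derive_n g k x.

Lemma Derive_n_Derive (g : R -> R) (k : nat) (x : R) :
  Derive_n (Derive g) k x = Derive_n g (S k) x.
Proof. now rewrite (Derive_n_comp g k 1), Nat.add_1_r. Qed.

Lemma C_n_S (n : nat) (g : R -> R) :
  C_n (S n) g <-> (forall x, ex_derive g x) /\ C_n n (Derive g).
Proof.
  split.
  - intros Hg; split; [intro x; exact (Hg 1%nat x ltac:(lia))|].
    intros [|k] x Hk; [exact I|].
    apply (ex_derive_ext (Derive_n g (S k))); [intro; symmetry; apply Derive_n_Derive|].
    apply (Hg (S (S k))); lia.
  - intros [Hg1 Hg] [|[|k]] x Hk; [exact I|apply Hg1|].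
    apply (ex_derive_ext (Derive_n (Derive g) k)); [intro; apply Derive_n_Derive|].
    apply (Hg (S k)); lia.
Qed.

Lemma C_n_ext (n : nat) (g1 g2 : R -> R) :
  (forall x, g1 x = g2 x) -> C_n n g1 -> C_n n g2.
Proof. intros E Hg k x Hk; apply (ex_derive_n_ext g1); auto. Qed.

Lemma C_n_le (m n : nat) (g : R -> R) : (m <= n)%nat -> C_n n g -> C_n m g.
Proof. intros Hmn Hg k x Hk; apply Hg; lia. Qed.

Lemma C_n_plus (n : nat) (g1 g2 : R -> R) :
  C_n n g1 -> C_n n g2 -> C_n n (fun x => g1 x + g2 x).
Proof.
  revert g1 g2; induction n as [|n IH]; intros g1 g2 H1 H2.
  - intros k x Hk; replace k with 0%nat by lia; exact I.
  - apply C_n_S in H1 as [D1 H1], H2 as [D2 H2]; apply C_n_S; split.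
    + intro x; apply (ex_derive_plus g1 g2); auto.
    + apply (C_n_ext _ (fun x => Derive g1 x + Derive g2 x)); [|now apply IH].
      intro x; symmetry; apply Derive_plus; auto.
Qed.

Lemma C_n_mult (n : nat) (g1 g2 : R -> R) :
  C_n n g1 -> C_n n g2 -> C_n n (fun x => g1 x * g2 x).
Proof.
  revert g1 g2; induction n as [|n IH]; intros g1 g2 H1 H2.
  - intros k x Hk; replace k with 0%nat by lia; exact I.
  - pose proof (C_n_le n (S n) g1 ltac:(lia) H1) as H1'.
    pose proof (C_n_le n (S n) g2 ltac:(lia) H2) as H2'.
    apply C_n_S in H1 as [D1 H1], H2 as [D2 H2]; apply C_n_S; split.
    + intro x; apply (ex_derive_mult g1 g2); auto.
    + apply (C_n_ext _ (fun x => Derive g1 x * g2 x + g1 x * Derive g2 x)).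
      * intro x; symmetry; apply Derive_mult; auto.
      * apply C_n_plus; apply IH; auto.
Qed.

Lemma C_n_comp (n : nat) (g1 g2 : R -> R) :
  C_n n g1 -> C_n n g2 -> C_n n (fun x => g1 (g2 x)).
Proof.
  revert g1 g2; induction n as [|n IH]; intros g1 g2 H1 H2.
  - intros k x Hk; replace k with 0%nat by lia; exact I.
  - pose proof (C_n_le n (S n) g1 ltac:(lia) H1) as H1'.
    pose proof (C_n_le n (S n) g2 ltac:(lia) H2) as H2'.
    apply C_n_S in H1 as [D1 H1], H2 as [D2 H2]; apply C_n_S; split.
    + intro x; apply (ex_derive_comp g1 g2); auto.
    + apply (C_n_ext _ (fun x => Derive g2 x * Derive g1 (g2 x))).
      * intro x; symmetry; apply Derive_comp; auto.
      * apply C_n_mult; [|apply IH]; auto.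
Qed.

Lemma smooth_C_n (g : R -> R) : smooth g <-> forall n, C_n n g.
Proof. split; [intros Hg n k x _; apply Hg | intros Hg n x; now apply (Hg n)]. Qed.

Lemma smooth_comp (g1 g2 : R -> R) :
  smooth g1 -> smooth g2 -> smooth (fun x => g1 (g2 x)).
Proof. rewrite !smooth_C_n; intros; now apply C_n_comp. Qed.

Lemma Derive_n_affine (g : R -> R) (a b : R) (k : nat) (t : R) : smooth g ->
  Derive_n (fun t => g (b + a * t)) k t = a ^ k * Derive_n g k (b + a * t).
Proof.
  intros Hg.
  rewrite (Derive_n_ext _ (fun t => (fun y => g (y + b)) (a * t))) by (intro; f_equal; ring).
  rewrite (Derive_n_comp_scal (fun y => g (y + b))).
  - now rewrite Derive_n_comp_trans, Rplus_comm.
  - apply filter_forall; intros y j _; apply ex_derive_n_comp_trans, Hg.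
Qed.

Lemma smooth_affine (g : R -> R) (a b : R) : smooth g -> smooth (fun t => g (b + a * t)).
Proof.
  intros Hg k t.
  apply (ex_derive_n_ext (fun t => (fun y => g (y + b)) (a * t))); [intro; f_equal; ring|].
  apply (ex_derive_n_comp_scal (fun y => g (y + b))).
  apply filter_forall; intros y j _; apply ex_derive_n_comp_trans, Hg.
Qed.

Lemma smooth2_section (g : R -> R -> R) (c : R) : smooth2 g -> smooth (fun t => g c t).
Proof.
  intros Hg.
  assert (E : forall n t, Derive_n (fun t => g c t) n t = pd (repeat false n) g c t).
  { induction n as [|n IH]; intro t; [reflexivity|]; exact (Derive_ext _ _ t IH). }
  intros [|n] x; [exact I|].
  apply (ex_derive_ext (fun t => pd (repeat false n) g c t)); [intro; symmetry; apply E|].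
  apply (proj1 (Hg (repeat false n))).
Qed.

Lemma smooth2_ex_diff_n (g : R -> R -> R) (n : nat) (x y : R) :
  smooth2 g -> ex_diff_n g n x y.
Proof.
  intros Hg; change g with (pd nil g); generalize (@nil bool).
  induction n as [|n IH]; intros ds;
    (split; [exact (proj2 (continuity_2d_pt_filterlim _ _ _) (proj2 (Hg ds) x y))|]).
  - exact I.
  - destruct (proj1 (Hg ds) x y) as [Hx Hy].
    exact (conj Hx (conj Hy (conj (IH (true :: ds)) (IH (false :: ds))))).
Qed.

Lemma smooth2_differentiable (g : R -> R -> R) (x y : R) : smooth2 g ->
  differentiable_pt_lim g x y (Derive (fun t => g t y) x) (Derive (fun t => g x t) y).
Proof.
  intros Hg eps.
  destruct (Taylor_Lagrange_2d g 1 x y) as [K HK].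
  { apply locally_2d_forall; intros; now apply smooth2_ex_diff_n. }
  (* The order-1 Taylor bound [K m^2], [m] the sup-distance to [(x, y)], is at most
     [eps m] as soon as [m < eps / (|K| + 1)]. *)
  assert (Hr : 0 < eps / (Rabs K + 1))
    by (apply Rdiv_lt_0_compat; [apply cond_pos|pose proof (Rabs_pos K); lra]).
  assert (Hball : locally_2d (fun u v => Rabs (u - x) < eps / (Rabs K + 1)
                                       /\ Rabs (v - y) < eps / (Rabs K + 1)) x y)
    by (exists (mkposreal _ Hr); auto).
  generalize (locally_2d_and _ _ _ _ HK Hball).
  apply locally_2d_impl, locally_2d_forall; intros u v [Hdl [Hu Hv]].
  unfold DL_pol, differential, partial_derive, Binomial.C in Hdl; simpl in Hdl.
  set (m := Rmax (Rabs (u - x)) (Rabs (v - y))) in *.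
  assert (HK1 : Rabs K + 1 > 0) by (pose proof (Rabs_pos K); lra).
  assert (Hm : m * (Rabs K + 1) < eps) by (apply Rlt_div_r; [|apply Rmax_case]; assumption).
  assert (Hm0 : 0 <= m) by (apply Rle_trans with (Rabs (u - x)); [apply Rabs_pos|apply Rmax_l]).
  pose proof (Rle_abs K).
  apply Rle_trans with (K * m ^ 2); [|nra].
  eapply Rle_trans; [|exact Hdl]; right; f_equal; field.
Qed.

Lemma Derive_symmetric_diag (g : R -> R -> R) (u : R -> R) (X : R) :
  smooth2 g -> (forall v w, g v w = g w v) -> ex_derive u X ->
  Derive (fun x => g (u x) (u x)) X = 2 * Derive (fun y => g (u X) (u y)) X.
Proof.
  intros Hg Hsym Hu.
  assert (Hl : derivable_pt_lim u X (Derive u X))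
    by now apply is_derive_Reals, Derive_correct.
  pose proof (derivable_pt_lim_comp_2d g u u X _ _ _ _
                (smooth2_differentiable g (u X) (u X) Hg) Hl Hl) as Hdiag.
  apply is_derive_Reals, is_derive_unique in Hdiag; rewrite Hdiag.
  rewrite (Derive_ext (fun t => g t (u X)) (fun t => g (u X) t)) by auto.
  rewrite (Derive_comp (fun t => g (u X) t) u X); [ring| |exact Hu].
  exact (smooth2_section g (u X) Hg 1%nat (u X)).
Qed.

Definition bigO (n : nat) (phi : R -> R) : Prop :=
  exists C delta, 0 < delta /\ forall h, 0 < h < delta -> Rabs (phi h) <= C * h ^ n.

Lemma bigO_ext (n : nat) (phi psi : R -> R) :
  (forall h, 0 < h -> phi h = psi h) -> bigO n phi -> bigO n psi.
Proof.
  intros E [C [d [Hd H]]]; exists C, d; split; auto.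
  intros h Hh; rewrite <- E by lra; auto.
Qed.

Lemma bigO_const (c : R) : bigO 0 (fun _ => c).
Proof. exists (Rabs c), 1; split; [lra|]; intros; simpl; lra. Qed.

Lemma bigO_pow (n : nat) : bigO n (fun h => h ^ n).
Proof.
  exists 1, 1; split; [lra|]; intros h Hh.
  rewrite Rabs_pos_eq by (apply pow_le; lra); lra.
Qed.

Lemma bigO_plus (n : nat) (phi psi : R -> R) :
  bigO n phi -> bigO n psi -> bigO n (fun h => phi h + psi h).
Proof.
  intros [C1 [d1 [Hd1 H1]]] [C2 [d2 [Hd2 H2]]].
  exists (C1 + C2), (Rmin d1 d2); split; [now apply Rmin_pos|].
  intros h [Hh0 Hh]; apply Rmin_Rgt in Hh as [Hh1 Hh2].
  eapply Rle_trans; [apply Rabs_triang|].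
  specialize (H1 h (conj Hh0 Hh1)); specialize (H2 h (conj Hh0 Hh2)); lra.
Qed.

Lemma bigO_mul (m n : nat) (phi psi : R -> R) :
  bigO m phi -> bigO n psi -> bigO (m + n) (fun h => phi h * psi h).
Proof.
  intros [C1 [d1 [Hd1 H1]]] [C2 [d2 [Hd2 H2]]].
  exists (C1 * C2), (Rmin d1 d2); split; [now apply Rmin_pos|].
  intros h [Hh0 Hh]; apply Rmin_Rgt in Hh as [Hh1 Hh2].
  specialize (H1 h (conj Hh0 Hh1)); specialize (H2 h (conj Hh0 Hh2)).
  rewrite Rabs_mult, pow_add.
  replace (C1 * C2 * (h ^ m * h ^ n)) with ((C1 * h ^ m) * (C2 * h ^ n)) by ring.
  apply Rmult_le_compat; auto; apply Rabs_pos.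
Qed.

Lemma bigO_weaken (m n : nat) (phi : R -> R) : (m <= n)%nat -> bigO n phi -> bigO m phi.
Proof.
  intros Hmn [C [d [Hd H]]]; exists (Rabs C), (Rmin d 1); split; [apply Rmin_pos; lra|].
  intros h [Hh0 Hh]; apply Rmin_Rgt in Hh as [Hhd Hh1].
  eapply Rle_trans; [apply H; lra|].
  assert (Hpow : h ^ n <= h ^ m).
  { replace n with (m + (n - m))%nat by lia; rewrite pow_add.
    rewrite <- (Rmult_1_r (h ^ m)) at 2.
    apply Rmult_le_compat_l; [apply pow_le; lra|].
    rewrite <- (pow1 (n - m)); apply pow_incr; lra. }
  pose proof (pow_le h n ltac:(lra)); pose proof (Rle_abs C); pose proof (Rabs_pos C); nra.
Qed.

Lemma bigO_div (n : nat) (phi : R -> R) : bigO (S n) phi -> bigO n (fun h => phi h / h).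
Proof.
  intros [C [d [Hd H]]]; exists C, d; split; auto; intros h Hh.
  unfold Rdiv; rewrite Rabs_mult, Rabs_inv, (Rabs_pos_eq h) by lra.
  apply (Rmult_le_reg_r h); [lra|].
  rewrite Rmult_assoc, Rinv_l, Rmult_1_r, Rmult_assoc by lra.
  rewrite (Rmult_comm (h ^ n) h), tech_pow_Rmult; apply H, Hh.
Qed.

Lemma bigO_monomial (n k : nat) (c : R) : (n <= k)%nat -> bigO n (fun h => c * h ^ k).
Proof.
  intros Hnk; apply (bigO_weaken n k); [exact Hnk|].
  apply (bigO_mul 0 k); [apply bigO_const|apply bigO_pow].
Qed.

Lemma bigO_mul_approx (m n m' n' : nat) (a a0 b b0 : R -> R) : (m + n = m' + n')%nat ->
  bigO m (fun h => a h - a0 h) -> bigO n b -> bigO m' a0 -> bigO n' (fun h => b h - b0 h) ->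
  bigO (m + n) (fun h => a h * b h - a0 h * b0 h).
Proof.
  intros Hmn Ha Hb Ha0 Hb0.
  apply (bigO_ext _ (fun h => (a h - a0 h) * b h + a0 h * (b h - b0 h))); [intros; ring|].
  apply bigO_plus; [|rewrite Hmn]; apply bigO_mul; assumption.
Qed.

Lemma taylor_remainder_bigO (phi : R -> R) (n : nat) : smooth phi ->
  bigO (S n) (fun h => phi h - sum_f_R0 (fun k => h ^ k / INR (fact k) * Derive_n phi k 0) n).
Proof.
  intros Hphi.
  set (d := Derive_n phi (S n)).
  destruct (continuity_ab_maj (fun t => Rabs (d t)) 0 1) as [t0 [Hmax _]]; [lra| |].
  { intros t _; apply continuity_pt_comp with (f2 := Rabs); [|apply Rcontinuity_abs].
    apply continuity_pt_filterlim; exact (ex_derive_continuous d t (Hphi (S (S n)) t)). }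
  exists (Rabs (d t0) / INR (fact (S n))), 1; split; [lra|]; intros h Hh.
  destruct (Taylor_Lagrange phi n 0 h) as [z [Hz ->]]; [lra|intros; apply Hphi|].
  rewrite Rminus_0_r.
  match goal with |- Rabs (?S + ?r - ?S) <= _ => replace (S + r - S) with r by ring end.
  assert (Hc : 0 <= h ^ S n / INR (fact (S n)))
    by (apply Rdiv_le_0_compat; [apply pow_le; lra|apply INR_fact_lt_0]).
  rewrite Rabs_mult, (Rabs_pos_eq _ Hc).
  apply Rle_trans with (h ^ S n / INR (fact (S n)) * Rabs (d t0)).
  - apply Rmult_le_compat_l; [exact Hc|apply Hmax; lra].
  - right; field; apply INR_fact_neq_0.
Qed.

Lemma taylor_offset_bigO (g : R -> R) (X m : R) (n : nat) : smooth g ->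
  bigO (S n) (fun h => g (X + m * h)
                     - sum_f_R0 (fun k => m ^ k / INR (fact k) * Derive_n g k X * h ^ k) n).
Proof.
  intros Hg; eapply bigO_ext; [|apply (taylor_remainder_bigO _ n (smooth_affine g m X Hg))].
  intros h _; cbv beta; f_equal; apply sum_eq; intros k _.
  rewrite Derive_n_affine, Rmult_0_r, Rplus_0_r by exact Hg.
  field; apply INR_fact_neq_0.
Qed.

Definition stencil (s : list (R * R)) (g : R -> R) (X h : R) : R :=
  fold_right (fun cm acc => fst cm * g (X + snd cm * h) + acc) 0 s.

Definition stencil_moment (s : list (R * R)) (k : nat) : R :=
  fold_right (fun cm acc => fst cm * snd cm ^ k + acc) 0 s.

Lemma stencil_taylor (g : R -> R) (s : list (R * R)) (X : R) (n : nat) : smooth g ->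
  bigO (S n) (fun h => stencil s g X h
    - sum_f_R0 (fun k => stencil_moment s k / INR (fact k) * Derive_n g k X * h ^ k) n).
Proof.
  intros Hg; induction s as [|[c m] s IH]; simpl.
  - apply (bigO_ext _ (fun h => 0 * h ^ S n)); [|apply bigO_monomial; lia].
    intros h _; rewrite (sum_eq _ (fun _ => 0)), sum_cte; [ring|].
    intros; unfold Rdiv; ring.
  - eapply bigO_ext; [|apply bigO_plus; [apply (bigO_mul 0 (S n)); [apply (bigO_const c)|]|];
                       [apply (taylor_offset_bigO g X m n Hg)|exact IH]].
    intros h _; cbv beta.
    set (t k := m ^ k / INR (fact k) * Derive_n g k X * h ^ k).
    set (ts k := stencil_moment s k / INR (fact k) * Derive_n g k X * h ^ k).
    rewrite (sum_eq (fun k => (c * m ^ k + stencil_moment s k) / INR (fact k)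
                              * Derive_n g k X * h ^ k) (fun k => t k * c + ts k)),
      plus_sum, <- scal_sum; [ring|].
    intros k _; unfold t, ts; field; apply INR_fact_neq_0.
Qed.

Lemma stencil_expansion (g : R -> R) (s : list (R * R)) (X : R) (n : nat) (p : R -> R) :
  smooth g ->
  (forall h, sum_f_R0 (fun k => stencil_moment s k / INR (fact k) * Derive_n g k X * h ^ k) n
             = p h) ->
  bigO (S n) (fun h => stencil s g X h - p h).
Proof.
  intros Hg Hp; eapply bigO_ext; [|apply (stencil_taylor g s X n Hg)].
  intros h _; cbv beta; now rewrite Hp.
Qed.

Definition flux_stencil (th : R) : list (R * R) :=
  [((3 - th) / 4, 1); (- ((3 - th) / 4), -1); (- ((1 - th) / 8), 2); ((1 - th) / 8, -2)].
Definition central_sum : list (R * R) := [(1, 1); (1, -1)].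
Definition central_difference1 : list (R * R) := [(1, 1); (-1, -1)].
Definition central_difference3 : list (R * R) := [(1, 2); (-2, 1); (2, -1); (-1, -2)].
Definition central_difference4 : list (R * R) := [(1, 2); (-4, 1); (6, 0); (-4, -1); (1, -2)].

Lemma fsr_error_stencils (u f : R -> R) (Dbar : R -> R -> R) (kap th h X : R) :
  h <> 0 -> (forall v w, Dbar v w = Dbar w v) ->
  let G := fun y => Dbar (u X) (u y) in
  fsr_error u f Dbar kap 0 th 0 h X =
  (stencil (flux_stencil th) (fun x => f (u x)) X h
   + (1 - kap) / 16 * (stencil central_difference1 G X h * stencil central_difference3 u X h
                       + stencil central_sum G X h * stencil central_difference4 u X h)) / h.
Proof.
  intros Hh Hsym G.
  unfold fsr_error, numflux, recL, recR, Tj, Tk, dxx, dx, G, stencil, flux_stencil,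
    central_difference1, central_difference3, central_difference4, central_sum; simpl.
  replace (X + 0 * h) with X by ring.
  rewrite (Hsym (u (X + -1 * h)) (u X)).
  field; exact Hh.
Qed.

(* The factorials are turned into numerals so that [field] sees nonzero constants. *)
Ltac expand_moments :=
  intro; cbn [stencil_moment flux_stencil central_sum central_difference1 central_difference3
              central_difference4 fold_right fst snd sum_f_R0 fact Nat.mul Nat.add pow Derive_n];
  rewrite ?INR_IZR_INZ; cbn [Z.of_nat Pos.of_succ_nat Pos.succ]; field.

Lemma flux_stencil_expansion (F : R -> R) (th X : R) : smooth F ->
  bigO 6 (fun h => stencil (flux_stencil th) F X h
                   - (Derive_n F 1 X * h + (3 * th - 1) / 12 * Derive_n F 3 X * h ^ 3
                      + (15 * th - 13) / 240 * Derive_n F 5 X * h ^ 5)).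
Proof. intros HF; apply stencil_expansion; [exact HF|expand_moments]. Qed.

Lemma central_sum_expansion (g : R -> R) (X : R) : smooth g ->
  bigO 2 (fun h => stencil central_sum g X h - 2 * g X).
Proof. intros Hg; apply stencil_expansion; [exact Hg|expand_moments]. Qed.

Lemma central_difference1_expansion (g : R -> R) (X : R) : smooth g ->
  bigO 3 (fun h => stencil central_difference1 g X h - 2 * Derive_n g 1 X * h).
Proof. intros Hg; apply stencil_expansion; [exact Hg|expand_moments]. Qed.

Lemma central_difference3_expansion (g : R -> R) (X : R) : smooth g ->
  bigO 5 (fun h => stencil central_difference3 g X h - 2 * Derive_n g 3 X * h ^ 3).
Proof. intros Hg; apply stencil_expansion; [exact Hg|expand_moments]. Qed.

Lemma central_difference4_expansion (g : R -> R) (X : R) : smooth g ->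
  bigO 6 (fun h => stencil central_difference4 g X h - Derive_n g 4 X * h ^ 4).
Proof. intros Hg; apply stencil_expansion; [exact Hg|expand_moments]. Qed.

Lemma central_difference3_bigO (g : R -> R) (X : R) : smooth g ->
  bigO 3 (fun h => stencil central_difference3 g X h).
Proof.
  intros Hg; apply (bigO_ext _ (fun h => stencil central_difference3 g X h - 0)).
  - intros; ring.
  - apply (stencil_expansion g central_difference3 X 2 (fun _ => 0) Hg); expand_moments.
Qed.

Lemma central_difference4_bigO (g : R -> R) (X : R) : smooth g ->
  bigO 4 (fun h => stencil central_difference4 g X h).
Proof.
  intros Hg; apply (bigO_ext _ (fun h => stencil central_difference4 g X h - 0)).
  - intros; ring.
  - apply (stencil_expansion g central_difference4 X 3 (fun _ => 0) Hg); expand_moments.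
Qed.

Lemma fsr_error_expansion (u f : R -> R) (Dbar : R -> R -> R) (kap th X : R) :
  smooth u -> smooth f -> smooth2 Dbar -> (forall v w, Dbar v w = Dbar w v) ->
  let F := fun x => f (u x) in
  let G := fun y => Dbar (u X) (u y) in
  bigO 5 (fun h => fsr_error u f Dbar kap 0 th 0 h X
    - (Derive_n F 1 X + (3 * th - 1) / 12 * Derive_n F 3 X * h ^ 2
       - (kap - 1) / 8 * (2 * Derive_n G 1 X * Derive_n u 3 X + G X * Derive_n u 4 X) * h ^ 3
       + (15 * th - 13) / 240 * Derive_n F 5 X * h ^ 4)).
Proof.
  intros Hu Hf HDbar Hsym F G.
  assert (HF : smooth F) by exact (smooth_comp f u Hf Hu).
  assert (HG : smooth G) by exact (smooth_comp _ u (smooth2_section Dbar (u X) HDbar) Hu).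
  assert (Hodd : bigO 6 (fun h =>
    stencil central_difference1 G X h * stencil central_difference3 u X h
    - (2 * Derive_n G 1 X * h) * (2 * Derive_n u 3 X * h ^ 3))).
  { apply (bigO_mul_approx 3 3 1 5); [reflexivity|now apply central_difference1_expansion
      |now apply central_difference3_bigO| |now apply central_difference3_expansion].
    apply (bigO_ext _ (fun h => 2 * Derive_n G 1 X * h ^ 1)); [intros; ring|].
    now apply bigO_monomial. }
  assert (Heven : bigO 6 (fun h =>
    stencil central_sum G X h * stencil central_difference4 u X h
    - (2 * G X) * (Derive_n u 4 X * h ^ 4))).
  { apply (bigO_mul_approx 2 4 0 6); [reflexivity|now apply central_sum_expansion
      |now apply central_difference4_bigO|apply bigO_const
      |now apply central_difference4_expansion]. }
  eapply bigO_ext; [|apply bigO_plus;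
    [apply bigO_div, (flux_stencil_expansion F th X HF)
    |apply (bigO_mul 0 5);
       [apply (bigO_const ((1 - kap) / 16))|apply bigO_div, bigO_plus; [exact Hodd|exact Heven]]]].
  intros h Hh; cbv beta; rewrite fsr_error_stencils by (lra || assumption).
  unfold F, G; field; lra.
Qed.

Theorem mainTheorem2 (u f D : R -> R) (Dbar : R -> R -> R) (kap th : R) :
  smooth u -> smooth f -> smooth D -> smooth2 Dbar ->
  (forall v w, Dbar v w = Dbar w v) ->
  (forall v, Dbar v v = D v) ->
  forall X : R,
    (exists C delta : R, 0 < delta /\
       forall h : R, 0 < h < delta ->
         Rabs (fsr_error u f Dbar kap 0 th 0 h X
               - (Derive (fun x => f (u x)) X
                  + (3 * th - 1) / 12 * Derive_n (fun x => f (u x)) 3 X * h ^ 2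
                  - (kap - 1) / 8
                      * (Derive (fun x => D (u x)) X * Derive_n u 3 X
                         + D (u X) * Derive_n u 4 X) * h ^ 3
                  + (15 * th - 13) / 240 * Derive_n (fun x => f (u x)) 5 X * h ^ 4))
         <= C * h ^ 5)
    /\
    (th = 1 / 3 ->
     exists C delta : R, 0 < delta /\
       forall h : R, 0 < h < delta ->
         Rabs (fsr_error u f Dbar kap 0 th 0 h X - Derive (fun x => f (u x)) X)
         <= C * h ^ 3).
Proof.
  intros Hu Hf _ HDbar Hsym Hdiag X.
  assert (HDu : Derive (fun x => D (u x)) X = 2 * Derive (fun y => Dbar (u X) (u y)) X).
  { rewrite (Derive_ext _ (fun x => Dbar (u x) (u x))) by (intro; now rewrite Hdiag).
    apply Derive_symmetric_diag; [exact HDbar|exact Hsym|apply (Hu 1%nat)]. }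
  set (A := (kap - 1) / 8 * (Derive (fun x => D (u x)) X * Derive_n u 3 X
                             + D (u X) * Derive_n u 4 X)).
  set (B := (15 * th - 13) / 240 * Derive_n (fun x => f (u x)) 5 X).
  assert (Hmain : bigO 5 (fun h => fsr_error u f Dbar kap 0 th 0 h X
      - (Derive (fun x => f (u x)) X + (3 * th - 1) / 12 * Derive_n (fun x => f (u x)) 3 X * h ^ 2
         - A * h ^ 3 + B * h ^ 4))).
  { eapply bigO_ext; [|exact (fsr_error_expansion u f Dbar kap th X Hu Hf HDbar Hsym)].
    intros h _; unfold A, B; rewrite HDu, <- Hdiag; reflexivity. }
  split; [exact Hmain|intros ->].
  apply (bigO_ext _ (fun h => (fsr_error u f Dbar kap 0 (1 / 3) 0 h X
      - (Derive (fun x => f (u x)) X + (3 * (1 / 3) - 1) / 12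
           * Derive_n (fun x => f (u x)) 3 X * h ^ 2 - A * h ^ 3 + B * h ^ 4))
      + (- A * h ^ 3 + B * h ^ 4))); [intros; field|].
  apply bigO_plus; [apply (bigO_weaken 3 5); [lia|exact Hmain]|].
  apply bigO_plus; apply bigO_monomial; lia.
Qed.
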